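(* Consider the SEIR$^{\mathrm T}$R$^{\mathrm P}$D system with distributed delays in the context, with constant history data $S(s)=c_S>0$, $I(s)=c_I>0$ for all $s\le0$, and initial data $E(0)=\beta_0c_Ic_S\int_\theta^L\Psi(\tau)\tau\,d\tau$, $R^{\mathrm T}(0)=c_Ip\gamma\int_\epsilon^M\Phi(\rho)\rho\,d\rho$, $R^{\mathrm P}(0)=(1-p)\gamma c_I\int_\theta^L\Psi(\tau)\tau\,d\tau$. Then there exists $r>0$ such that each of the solution functions $S,E,I,R^{\mathrm T},R^{\mathrm P}$ is $r$-increasingly smooth.
   Context: The system is $S'(t)=-\beta(t)I(t)S(t)+p\gamma\int_{0}^{\infty}I(t-\rho)\Phi(\rho)\,d\rho$, $E'(t)=\beta(t)I(t)S(t)-\int_{0}^{\infty}\beta(t-\tau)I(t-\tau)S(t-\tau)\Psi(\tau)\,d\tau$, $I'(t)=\int_{0}^{\infty}\beta(t-\tau)I(t-\tau)S(t-\tau)\Psi(\tau)\,d\tau-\gamma I(t)-\mu I(t)$, $R^{\mathrm T\prime}(t)=p\gamma I(t)-p\gamma\int_{0}^{\infty}I(t-\rho)\Phi(\rho)\,d\rho$, $R^{\mathrm P\prime}(t)=(1-p)\gamma I(t)$, $D'(t)=\mu I(t)$, for $t>0$, with constants $\gamma,\mu\ge0$, $p\in[0,1]$. $\beta$ is a non-negative smooth function on $\mathbb R$ with $\beta(s)=\beta_0$ for $s\le0$. $\Psi,\Phi$ are non-negative Lebesgue integrable probability densities on $[0,\infty)$ with $\operatorname{supp}\Psi\subset[\theta,L]$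 for some $0<\theta<L<\infty$ and $\operatorname{supp}\Phi\subset[\epsilon,M]$ for some $0<\epsilon<M<\infty$. Definition: for $r>0$, a function $f$ defined on $(0,\infty)$ is $r$-increasingly smooth if $f\in C^{n+1}((rn,\infty))$ for every $n=0,1,2,\ldots$. *)

From HB Require Import structures.
From mathcomp Require Import all_boot all_order all_algebra.
From mathcomp Require Import all_classical all_reals all_analysis.
Set Implicit Arguments. Unset Strict Implicit. Unset Printing Implicit Defensive.
Import Order.TTheory GRing.Theory Num.Theory.
Import numFieldNormedType.Exports.
Local Open Scope classical_set_scope.
Local Open Scope ring_scope.

Notation Leb := lebesgue_measure.

Definition Ck_from {R : realType} (k : nat) (f : R -> R) (a : R) : Prop :=
  forall x : R, a < x ->
    (forall j : nat, (j < k)%N -> derivable (derive1n j f) x 1) /\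
    {for x, continuous (derive1n k f)}.

Definition increasingly_smooth {R : realType} (r : R) (f : R -> R) : Prop :=
  forall n : nat, Ck_from n.+1 f (r * n%:R).

Definition smooth_R {R : realType} (f : R -> R) : Prop :=
  forall (k : nat) (x : R), derivable (derive1n k f) x 1.

Definition density_supported {R : realType} (Psi : R -> R) (a b : R) : Prop :=
  (forall x, 0 <= x -> 0 <= Psi x) /\
  Leb.-integrable `[0, +oo[ (EFin \o Psi) /\
  \int[Leb]_(x in `[0, +oo[) Psi x = 1 /\
  (forall x, 0 <= x -> (x < a \/ b < x) -> Psi x = 0).

Definition SEIRD_solution {R : realType} (beta Psi Phi : R -> R)
    (gamma mu p : R) (S E I RT RP D : R -> R) : Prop :=
  {within `[0, +oo[, continuous S} /\ {within `[0, +oo[, continuous E} /\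
  {within `[0, +oo[, continuous I} /\ {within `[0, +oo[, continuous RT} /\
  {within `[0, +oo[, continuous RP} /\ {within `[0, +oo[, continuous D} /\
  forall t : R, 0 < t ->
    (derivable S t 1 /\ derivable E t 1 /\ derivable I t 1 /\
     derivable RT t 1 /\ derivable RP t 1 /\ derivable D t 1) /\
    let infl := \int[Leb]_(tau in `[0, +oo[)
                  (beta (t - tau) * I (t - tau) * S (t - tau) * Psi tau) in
    let rec := \int[Leb]_(rho in `[0, +oo[) (I (t - rho) * Phi rho) in
    (derive1 S t = - beta t * I t * S t + p * gamma * rec /\
     derive1 E t = beta t * I t * S t - infl /\
     derive1 I t = infl - gamma * I t - mu * I t /\
     derive1 RT t = p * gamma * I t - p * gamma * rec /\
     derive1 RP t = (1 - p) * gamma * I t /\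
     derive1 D t = mu * I t).

(* The delay terms are convolutions of S, I and beta I S with densities supported in
   [0, L] and [0, M].  Differentiating under the integral sign, such a convolution of a
   function that is C^k on (a, +oo) is C^k on (a + L, +oo), resp. (a + M, +oo).  Hence if
   S and I are C^n on (a, +oo), every right-hand side of the system is C^n on
   (a + L + M, +oo), so all compartments are C^(n+1) there.  Since the constant history
   makes S and I continuous on the whole line, induction on n with r = L + M shows that
   every compartment is C^(n+1) on (r n, +oo). *)

From HB Require Import structures.
From mathcomp Require Import all_boot all_order all_algebra.
From mathcomp Require Import all_classical all_reals all_analysis.
From mathcomp Require Import measurable_realfun lebesgue_integral_under.
From mathcomp Require Import lra ring.
Import Order.TTheory GRing.Theory Num.Theory.
Import numFieldNormedType.Exports.
Local Open Scope classical_set_scope.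
Local Open Scope ring_scope.
Set Implicit Arguments. Unset Strict Implicit.


Section Ck_from.
Context {R : realType}.
Implicit Types (f g : R -> R) (a b c x : R).

Lemma derivable_continuous_at f x : derivable f x 1 -> {for x, continuous f}.
Proof. by move=> /derivable1_diffP/differentiable_continuous. Qed.

Lemma Ck_from_continuous k f a : Ck_from k f a -> forall x, a < x -> {for x, continuous f}.
Proof.
case: k => [|k] fk x ax; have [df cf] := fk x ax; first exact: cf.
exact: derivable_continuous_at (df 0%N isT).
Qed.

Lemma Ck_fromS k f a : (forall x, a < x -> derivable f x 1) ->
  Ck_from k (derive1 f) a -> Ck_from k.+1 f a.
Proof.
move=> df fk x ax; have [dfk cfk] := fk x ax; split; last by rewrite derive1Sn.
by case=> [|j] jk; [exact: df | rewrite derive1Sn; exact: dfk].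
Qed.

Lemma Ck_fromSP k f a : Ck_from k.+1 f a ->
  (forall x, a < x -> derivable f x 1) /\ Ck_from k (derive1 f) a.
Proof.
move=> fk; split=> [x /fk [df _]|x /fk [df cf]]; first exact: (df 0%N).
by split=> [j jk|]; rewrite -derive1Sn //; exact: df.
Qed.

Lemma Ck_from_le k f a b : a <= b -> Ck_from k f a -> Ck_from k f b.
Proof. by move=> ab fk x bx; apply: fk; exact: le_lt_trans bx. Qed.

Lemma Ck_from_leq j k f a : (j <= k)%N -> Ck_from k f a -> Ck_from j f a.
Proof.
elim: j k f => [|j IH] [|k] f // jk fk.
- by move=> x ax; split => //; exact: Ck_from_continuous fk x ax.
- by have [df fk'] := Ck_fromSP fk; apply: Ck_fromS => //; exact: IH fk'.
Qed.

Lemma derive1n_eq_gt j f g a : (forall x, a < x -> f x = g x) ->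
  forall x, a < x -> derive1n j f x = derive1n j g x.
Proof.
move=> fg; elim: j => [|j IH] x ax; first exact: fg.
rewrite /= !derive1E; apply: near_eq_derive.
by near=> y; apply: IH; near: y; exact: lt_nbhsr.
Unshelve. all: by end_near. Qed.

Lemma Ck_from_eq k f g a : (forall x, a < x -> f x = g x) ->
  Ck_from k f a -> Ck_from k g a.
Proof.
move=> fg fk x ax; have [dfk cfk] := fk x ax.
have fg_near j : \forall y \near x, derive1n j f y = derive1n j g y.
  by near=> y; apply: derive1n_eq_gt fg _ _; near: y; exact: lt_nbhsr.
split=> [j jk|]; first exact: near_eq_derivable (dfk j jk).
rewrite /prop_for /continuous_at -(derive1n_eq_gt k fg ax).
exact: cvg_trans (near_eq_cvg (fg_near k)) cfk.
Unshelve. all: by end_near. Qed.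

Lemma Ck_from_derive1_eq k f g a : (forall x, a < x -> derivable f x 1) ->
  (forall x, a < x -> derive1 f x = g x) -> Ck_from k g a -> Ck_from k.+1 f a.
Proof.
move=> df f'g gk; apply: Ck_fromS => //.
by apply: Ck_from_eq gk => x ax; rewrite f'g.
Qed.

Lemma Ck_from_cst k c a : Ck_from k (cst c) a.
Proof.
elim: k c => [|k IH] c; first by move=> x ax; split => //; exact: cst_continuous.
apply: (Ck_from_derive1_eq (g := cst 0)) (IH 0) => x _; first exact: derivable_cst.
by rewrite derive1_cst.
Qed.

Lemma Ck_from_add k f g a : Ck_from k f a -> Ck_from k g a ->
  Ck_from k (fun x => f x + g x) a.
Proof.
elim: k f g => [|k IH] f g fk gk.
  move=> x ax; split => //.
  exact: cvgD (Ck_from_continuous fk ax) (Ck_from_continuous gk ax).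
have [df fk'] := Ck_fromSP fk; have [dg gk'] := Ck_fromSP gk.
apply: Ck_from_derive1_eq (IH _ _ fk' gk') => x ax.
  exact: derivableD (df x ax) (dg x ax).
by rewrite !derive1E deriveD //; [apply: df | apply: dg].
Qed.

Lemma Ck_from_mul k f g a : Ck_from k f a -> Ck_from k g a ->
  Ck_from k (fun x => f x * g x) a.
Proof.
elim: k f g => [|k IH] f g fk gk.
  move=> x ax; split => //.
  exact: cvgM (Ck_from_continuous fk ax) (Ck_from_continuous gk ax).
have [df fk'] := Ck_fromSP fk; have [dg gk'] := Ck_fromSP gk.
have [fk1 gk1] := (Ck_from_leq (leqnSn k) fk, Ck_from_leq (leqnSn k) gk).
apply: Ck_from_derive1_eq (Ck_from_add (IH _ _ fk1 gk') (IH _ _ gk1 fk')) => x ax.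
  exact: derivableM (df x ax) (dg x ax).
by rewrite !derive1E deriveM; [|apply: df|apply: dg].
Qed.

Lemma Ck_from_scale k c f a : Ck_from k f a -> Ck_from k (fun x => c * f x) a.
Proof. by move=> fk; have /= := Ck_from_mul (Ck_from_cst k c (a:=a)) fk. Qed.

Lemma smooth_Ck_from k f a : smooth_R f -> Ck_from k f a.
Proof.
move=> sf x ax; split=> [j _|]; first exact: sf.
exact: derivable_continuous_at (sf k x).
Qed.

End Ck_from.

Lemma is_derive_shift_mulr {R : realType} (g : R -> R) (y c x : R) :
  derivable g (x - y) 1 ->
  is_derive x (1 : R) (fun z => g (z - y) * c) (derive1 g (x - y) * c).
Proof.
move=> dg.
have shift : is_derive x (1 : R) (fun z => z - y) 1 by apply: is_derive_eq; rewrite subr0.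
have g' : is_derive (x - y) (1 : R) g (derive1 g (x - y)).
  by rewrite derive1E; exact: derivableP.
have := @is_derive1_comp _ g (fun z => z - y) x _ _ g' shift; rewrite mulr1 => gshift.
by apply: is_derive_eq; rewrite scaler0 add0r mulrC.
Qed.

Lemma continuous_gt_bounded_itv {R : realType} (g : R -> R) a c d : a < c ->
  (forall x, a < x -> {for x, continuous g}) ->
  exists C, 0 <= C /\ forall s, c <= s -> s <= d -> `|g s| <= C.
Proof.
move=> ac cg; have [dc|cd] := ltP d c.
  by exists 0; split => // s cs sd; have := lt_le_trans dc (le_trans cs sd); rewrite ltxx.
have cn : {within `[c, d], continuous (fun s => `|g s|)}.
  apply: continuous_in_subspaceT => s; rewrite inE /= in_itv /= => /andP[cs _].
  apply: (@continuous_comp _ _ _ g Num.norm); first exact: cg (lt_le_trans ac cs).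
  exact: norm_continuous.
have [s0 _ gs0] := EVT_max cd cn.
by exists `|g s0|; split => // s cs sd; apply: gs0; rewrite in_itv /= cs sd.
Qed.

Lemma continuous_history {R : realType} (f : R -> R) c :
  {within `[0, +oo[, continuous f} -> (forall s, s <= 0 -> f s = c) -> continuous f.
Proof.
move=> /continuous_within_itvcyP [cf cf0] fc x.
have [x0|x0|->] := ltgtP x 0.
- have fxE : \forall y \near x, f x = f y.
    by near=> y; rewrite !fc ?(ltW x0) //; apply: ltW; near: y; exact: lt_nbhsl.
  exact: cvg_trans (near_eq_cvg fxE) (cvg_cst (f x)).
- by apply: cf; rewrite in_itv /= x0.
- apply/(left_right_continuousP f 0); split => //.
  have f0E : \forall y \near 0^'-, f 0 = f y.
    by near=> y; rewrite !fc ?lexx //; apply: ltW; near: y; exact: nbhs_left_lt.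
  exact: cvg_trans (near_eq_cvg f0E) (cvg_cst (f 0)).
Unshelve. all: by end_near. Qed.

Section delay_convolution.
Context {R : realType}.
Variables (Phi : R -> R) (M : R).
Hypothesis Phi_int : Leb.-integrable `[0, +oo[ (EFin \o Phi).
Hypothesis Phi_gtM : forall x, M < x -> Phi x = 0.

Definition delay_conv (g : R -> R) t := \int[Leb]_(y in `[0, +oo[) (g (t - y) * Phi y).

Definition delay_conv_trunc (g : R -> R) t := \int[Leb]_(y in `[0, M]) (g (t - y) * Phi y).

Lemma delay_conv_truncE g t : delay_conv g t = delay_conv_trunc g t.
Proof.
rewrite /delay_conv /delay_conv_trunc Rintegral_mkcond [RHS]Rintegral_mkcond.
apply: eq_Rintegral => y _; rewrite /patch; case: ifPn; case: ifPn => //.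
- rewrite !inE /= !in_itv /= => /negP yM /andP[y0 _].
  rewrite Phi_gtM ?mulr0 // ltNge; apply/negP => yleM; apply: yM.
  by rewrite inE /= in_itv /= y0 yleM.
- rewrite inE /= in_itv /= => /andP[y0 _].
  by move=> /negP[]; rewrite inE /= in_itv /= y0.
Qed.

Let itv0M_measurable := measurable_itv (R := R) `[0, M].

Lemma integrable_Phi_trunc : Leb.-integrable `[0, M] (EFin \o Phi).
Proof.
apply: integrableS Phi_int; [exact: measurable_itv|exact: measurable_itv|].
by move=> y /=; rewrite !in_itv /= => /andP[->].
Qed.

Lemma integrable_scaled_abs_Phi (C : R) :
  Leb.-integrable `[0, M] (EFin \o (fun y => C * `|Phi y|)).
Proof.
have := @integrableZl _ _ _ Leb _ itv0M_measurable C _ (integrable_norm integrable_Phi_trunc).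
by apply: eq_integrable => // y _ /=; rewrite EFinM.
Qed.

Lemma integrable_delay_trunc (h : R -> R) a t :
  (forall x, a < x -> {for x, continuous h}) -> a + M < t ->
  Leb.-integrable `[0, M] (EFin \o (fun y => h (t - y) * Phi y)).
Proof.
move=> ch aMt; have aM : a < t - M by lra.
have [C [_ hC]] := continuous_gt_bounded_itv t aM ch.
pose h_t y := h (t - y).
apply: (@eq_integrable _ _ _ Leb _ _ ((EFin \o Phi) \* (EFin \o h_t))%E).
- exact: measurable_itv.
- by move=> y _ /=; rewrite -EFinM mulrC.
apply: integrableMl => //; first exact: integrable_Phi_trunc.
- apply: subspace_continuous_measurable_fun; first exact: itv0M_measurable.
  apply: continuous_in_subspaceT => y; rewrite inE /= in_itv /= => /andP[y0 yM].
  apply: (@continuous_comp _ _ _ (fun y => t - y) h); first exact: cvgB (cvg_cst t) cvg_id.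
  by apply: ch; lra.
- exists C; split; first exact: num_real.
  move=> z Cz y /=; rewrite in_itv /= => /andP[y0 yM]; apply: le_trans (ltW Cz).
  by apply: hC; lra.
Qed.

(* The uniform bound on a neighbourhood of t that dominates the integrand when passing
   limits and derivatives under the integral sign. *)
Lemma delay_window_bound (h : R -> R) a t :
  (forall x, a < x -> {for x, continuous h}) -> a + M < t ->
  exists u C, [/\ a + M < u, `]u, t + 1[%classic t, 0 <= C &
    forall x y, `]u, t + 1[%classic x -> `[0, M]%classic y -> `|h (x - y)| <= C].
Proof.
move=> ch aMt; have [aMu ut] := midf_lt aMt; set u := (a + M + t) / 2 in aMu ut.
have aM : a < u - M by lra.
have [C [C0 hC]] := continuous_gt_bounded_itv (t + 1) aM ch.
exists u, C; split => //; first by rewrite /= in_itv /= ut; lra.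
by move=> x y /=; rewrite !in_itv /= => /andP[ux xt] /andP[y0 yM]; apply: hC; lra.
Qed.

Lemma continuous_delay_conv_trunc (g : R -> R) a t :
  (forall x, a < x -> {for x, continuous g}) -> a + M < t ->
  {for t, continuous (delay_conv_trunc g)}.
Proof.
move=> cg aMt; have [u [C [aMu Wt _ gC]]] := delay_window_bound cg aMt.
have Wgt x : `]u, t + 1[%classic x -> a + M < x.
  by rewrite /= in_itv /= => /andP[ux _]; lra.
apply: (@continuity_under_integral R _ _ Leb (fun x y => g (x - y) * Phi y) `[0, M]
  itv0M_measurable u (t + 1)) => [x /Wgt|||x Wx|]; last by rewrite inE.
- exact: integrable_delay_trunc.
- apply: aeW => y /= y0M x /[!inE] /Wgt aMx.
  apply: cvgMr_tmp; apply: (@continuous_comp _ _ _ (fun x => x - y) g).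
    exact: cvgB cvg_id (cvg_cst y).
  by apply: cg; move: y0M; rewrite in_itv /= => /andP[_ yM]; lra.
- exact: integrable_scaled_abs_Phi C.
- by apply: aeW => y y0M; rewrite normrM ler_wpM2r // gC.
Qed.

Lemma derive_delay_conv_trunc (g : R -> R) a t : (forall x, a < x -> derivable g x 1) ->
  (forall x, a < x -> {for x, continuous (derive1 g)}) -> a + M < t ->
  derivable (delay_conv_trunc g) t 1 /\
  derive1 (delay_conv_trunc g) t = delay_conv_trunc (derive1 g) t.
Proof.
move=> dg cg' aMt; have [u [C [aMu Wt C0 g'C]]] := delay_window_bound cg' aMt.
pose f x y := g (x - y) * Phi y.
have gt_a x y : `]u, t + 1[%classic x -> `[0, M]%classic y -> a < x - y.
  by rewrite /= !in_itv /= => /andP[ux _] /andP[_ yM]; lra.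
have f_derive x y Wx y0M := is_derive_shift_mulr (Phi y) (dg _ (gt_a x y Wx y0M)).
have f_partial x y : `]u, t + 1[%classic x -> `[0, M]%classic y ->
    partial1of2 f x y = derive1 g (x - y) * Phi y.
  move=> Wx y0M; rewrite /partial1of2 /= derive1E.
  exact: (@derive_val _ _ _ _ _ _ _ (f_derive x y Wx y0M)).
have f_int x : `]u, t + 1[%classic x -> Leb.-integrable `[0, M] (EFin \o f x).
  move=> Wx; apply: (integrable_delay_trunc (a := a)).
    by move=> z az; exact: derivable_continuous_at (dg z az).
  by move: Wx; rewrite /= in_itv /= => /andP[ux _]; lra.
have f_derivable x y Wx y0M : derivable (f^~ y) x 1 :=
  @ex_derive _ _ _ _ _ _ _ (f_derive x y Wx y0M).
have dom_ge0 y : 0 <= C * `|Phi y| by rewrite mulr_ge0.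
have f_dom x y : `]u, t + 1[%classic x -> `[0, M]%classic y ->
    `|partial1of2 f x y| <= C * `|Phi y|.
  by move=> Wx y0M; rewrite f_partial // normrM ler_wpM2r // g'C.
have dom_int := integrable_scaled_abs_Phi C.
split; first exact: (@derivable_under_integral R _ _ Leb f _ itv0M_measurable t u (t + 1)
  Wt f_int f_derivable _ dom_ge0 dom_int f_dom).
rewrite /delay_conv_trunc (@differentiation_under_integral R _ _ Leb f _ itv0M_measurable
  t u (t + 1) Wt f_int f_derivable _ dom_ge0 dom_int f_dom).
by apply: eq_Rintegral => y /[!inE] y0M; rewrite f_partial.
Qed.

Lemma Ck_from_delay_conv_trunc k (g : R -> R) a :
  Ck_from k g a -> Ck_from k (delay_conv_trunc g) (a + M).
Proof.
elim: k g => [|k IH] g gk.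
  move=> x ax; split => //.
  exact: continuous_delay_conv_trunc (Ck_from_continuous gk) ax.
have [dg gk'] := Ck_fromSP gk; have cg' := Ck_from_continuous gk'.
apply: Ck_from_derive1_eq (IH _ gk') => x ax.
- exact: (derive_delay_conv_trunc dg cg' ax).1.
- exact: (derive_delay_conv_trunc dg cg' ax).2.
Qed.

Lemma Ck_from_delay_conv k (g : R -> R) a :
  Ck_from k g a -> Ck_from k (delay_conv g) (a + M).
Proof.
move=> gk; apply: Ck_from_eq (Ck_from_delay_conv_trunc gk) => x _.
by rewrite delay_conv_truncE.
Qed.

End delay_convolution.

Section SEIRD.
Context {R : realType}.
Variables (beta Psi Phi : R -> R) (gamma mu p L M : R) (S E I RT RP D : R -> R).
Hypothesis beta_smooth : smooth_R beta.
Hypotheses (L_gt0 : 0 < L) (M_gt0 : 0 < M).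
Hypotheses (Psi_int : Leb.-integrable `[0, +oo[ (EFin \o Psi))
  (Psi_gtL : forall x, L < x -> Psi x = 0).
Hypotheses (Phi_int : Leb.-integrable `[0, +oo[ (EFin \o Phi))
  (Phi_gtM : forall x, M < x -> Phi x = 0).
Hypotheses (S_cont : continuous S) (I_cont : continuous I).
Hypothesis sol : SEIRD_solution beta Psi Phi gamma mu p S E I RT RP D.

Let r := L + M.
Let incidence t := beta t * I t * S t.

Lemma Ck_from_SEIRD_step n a : 0 <= a + r -> Ck_from n S a -> Ck_from n I a ->
  [/\ Ck_from n.+1 S (a + r), Ck_from n.+1 E (a + r), Ck_from n.+1 I (a + r),
      Ck_from n.+1 RT (a + r) & Ck_from n.+1 RP (a + r)].
Proof.
move=> ar_ge0 Sn In.
have [_ [_ [_ [_ [_ [_ ode]]]]]] := sol.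
have pos x : a + r < x -> 0 < x by exact: le_lt_trans.
have Ia : a <= a + r by rewrite lerDl; exact: ltW (addr_gt0 L_gt0 M_gt0).
have In' : Ck_from n I (a + r) := Ck_from_le Ia In.
have inc : Ck_from n incidence a.
  by have /= := Ck_from_mul (Ck_from_mul (smooth_Ck_from n (a := a) beta_smooth) In) Sn.
have inc' : Ck_from n incidence (a + r) := Ck_from_le Ia inc.
have inflow : Ck_from n (delay_conv Psi incidence) (a + r).
  by apply: Ck_from_le (Ck_from_delay_conv Psi_int Psi_gtL inc); rewrite lerD2l lerDl ltW.
have recovery : Ck_from n (delay_conv Phi I) (a + r).
  by apply: Ck_from_le (Ck_from_delay_conv Phi_int Phi_gtM In); rewrite lerD2l lerDr ltW.
split.
- apply: (Ck_from_derive1_eq (g := fun x => -1 * incidence x + p * gamma * delay_conv Phi I x)).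
  + by move=> x /pos /ode [[? _] _].
  + by move=> x /pos /ode [_ /= [-> _]]; rewrite /incidence /delay_conv; ring.
  + exact: Ck_from_add (Ck_from_scale _ inc') (Ck_from_scale _ recovery).
- apply: (Ck_from_derive1_eq (g := fun x => incidence x + -1 * delay_conv Psi incidence x)).
  + by move=> x /pos /ode [[_ [? _]] _].
  + by move=> x /pos /ode [_ /= [_ [-> _]]]; rewrite /incidence /delay_conv; ring.
  + exact: Ck_from_add inc' (Ck_from_scale _ inflow).
- apply: (Ck_from_derive1_eq (g := fun x => delay_conv Psi incidence x + - (gamma + mu) * I x)).
  + by move=> x /pos /ode [[_ [_ [? _]]] _].
  + by move=> x /pos /ode [_ /= [_ [_ [-> _]]]]; rewrite /incidence /delay_conv; ring.
  + exact: Ck_from_add inflow (Ck_from_scale _ In').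
- apply: (Ck_from_derive1_eq (g := fun x => p * gamma * I x + - (p * gamma) * delay_conv Phi I x)).
  + by move=> x /pos /ode [[_ [_ [_ [? _]]]] _].
  + by move=> x /pos /ode [_ /= [_ [_ [_ [-> _]]]]]; rewrite /delay_conv; ring.
  + exact: Ck_from_add (Ck_from_scale _ In') (Ck_from_scale _ recovery).
- apply: (Ck_from_derive1_eq (g := fun x => (1 - p) * gamma * I x)).
  + by move=> x /pos /ode [[_ [_ [_ [_ [? _]]]]] _].
  + by move=> x /pos /ode [_ /= [_ [_ [_ [_ [-> _]]]]]].
  + exact: Ck_from_scale _ In'.
Qed.

Lemma Ck_from_SI n : Ck_from n S (r * n%:R - r) /\ Ck_from n I (r * n%:R - r).
Proof.
elim: n => [|n [Sn In]]; first by split=> x _; split=> //; [exact: S_cont|exact: I_cont].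
have rn : r * n.+1%:R - r = r * n%:R - r + r by rewrite subrK -natr1 mulrDr mulr1 addrK.
have rn_ge0 : 0 <= r * n%:R - r + r by rewrite subrK mulr_ge0 // ltW // addr_gt0.
by rewrite rn; have [? _ ? _ _] := Ck_from_SEIRD_step rn_ge0 Sn In.
Qed.

Lemma increasingly_smooth_SEIRD :
  [/\ increasingly_smooth r S, increasingly_smooth r E, increasingly_smooth r I,
      increasingly_smooth r RT & increasingly_smooth r RP].
Proof.
have rn_ge0 n : 0 <= r * n%:R - r + r by rewrite subrK mulr_ge0 // ltW // addr_gt0.
split=> n; have [Sn In] := Ck_from_SI n;
  by have [] := Ck_from_SEIRD_step (rn_ge0 n) Sn In; rewrite subrK.
Qed.

End SEIRD.

Unset Implicit Arguments.

Theorem theorem4 (R : realType) (beta : R -> R) (beta0 : R)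
  (Psi Phi : R -> R) (theta L eps M gamma mu p cS cI : R)
  (S E I RT RP D : R -> R) :
  smooth_R beta -> (forall s, 0 <= beta s) -> (forall s, s <= 0 -> beta s = beta0) ->
  0 < theta -> theta < L -> 0 < eps -> eps < M ->
  density_supported Psi theta L -> density_supported Phi eps M ->
  0 <= gamma -> 0 <= mu -> 0 <= p -> p <= 1 ->
  0 < cS -> 0 < cI ->
  (forall s, s <= 0 -> S s = cS) -> (forall s, s <= 0 -> I s = cI) ->
  E 0 = beta0 * cI * cS * \int[Leb]_(tau in `[theta, L]) (Psi tau * tau) ->
  RT 0 = cI * p * gamma * \int[Leb]_(rho in `[eps, M]) (Phi rho * rho) ->
  RP 0 = (1 - p) * gamma * cI * \int[Leb]_(tau in `[theta, L]) (Psi tau * tau) ->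
  SEIRD_solution beta Psi Phi gamma mu p S E I RT RP D ->
  exists r : R, 0 < r /\
    [/\ increasingly_smooth r S, increasingly_smooth r E, increasingly_smooth r I,
        increasingly_smooth r RT & increasingly_smooth r RP].
Proof.
move=> beta_smooth _ _ theta_gt0 thetaL eps_gt0 epsM [_ [Psi_int [_ Psi_supp]]]
  [_ [Phi_int [_ Phi_supp]]] _ _ _ _ _ _ S_hist I_hist _ _ _ sol.
have L_gt0 : 0 < L by lra.
have M_gt0 : 0 < M by lra.
have Psi_gtL x : L < x -> Psi x = 0 by move=> Lx; apply: Psi_supp; [lra|right].
have Phi_gtM x : M < x -> Phi x = 0 by move=> Mx; apply: Phi_supp; [lra|right].
have [S_cont [_ [I_cont _]]] := sol.
exists (L + M); split; first exact: addr_gt0.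
exact: increasingly_smooth_SEIRD beta_smooth L_gt0 M_gt0 Psi_int Psi_gtL Phi_int Phi_gtM
  (continuous_history S_cont S_hist) (continuous_history I_cont I_hist) sol.
Qed.
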